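(* Let $T$ be a regular, $T_{\mathrm{bin}}$-free binary tree. Then there exists a constant $C\in\mathbb N$ such that every anti-chain $A\subseteq T$ (with respect to the prefix order) contains at most $C$ elements $u$ with $\mathrm{CB}_*(T\restriction u)=\mathrm{CB}_*(T)$.
   Context: A binary tree is a prefix-closed subset $T\subseteq\{0,1\}^*$; it is regular if it is a regular language over $\{0,1\}$. For $u\in T$, $T\restriction u=\{v\in\{0,1\}^*:uv\in T\}$. $T_{\mathrm{bin}}=\{0,1\}^*$ ordered by the prefix relation $\preceq$; $T$ is $T_{\mathrm{bin}}$-free if there is no injection $f:\{0,1\}^*\to T$ with $u\preceq v\iff f(u)\preceq f(v)$. An infinite branch of $T$ is an infinite prefix-closed subset of $T$ linearly ordered by $\preceq$. The derivative $d(T)$ is the set of $u\in T$ contained in at least two distinct infinite branches of $T$; $d^{(0)}(T)=T$, $d^{(n)}(T)=d(d^{(n-1)}(T))$. For regular $T_{\mathrm{bin}}$-free $T$ some $d^{(n)}(T)$ is finite, and $\mathrm{CB}_*(T)$ is the least $n\in\mathbb N$ such that $d^{(n)}(T)$ is finite. An anti-chain is a set of pairwise $\preceq$-incomparable elements. *)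

(* Words over {0,1} are [seq bool] (false = 0, true = 1).
   Sets of words (trees, branches, anti-chains) are Prop-valued predicates. *)
From mathcomp Require Import all_boot.
Unset Printing Implicit Defensive.

Definition word := seq bool.
Definition wset := word -> Prop.

Definition preceq (u v : word) : bool := prefix u v.

Definition is_tree (T : wset) : Prop := forall u v : word, T (u ++ v) -> T u.

Record dfa := DFA {
  dfa_state : finType;
  dfa_start : dfa_state;
  dfa_delta : dfa_state -> bool -> dfa_state;
  dfa_final : pred dfa_state }.

Definition dfa_accept (M : dfa) (w : word) : bool :=
  dfa_final M (foldl (dfa_delta M) (dfa_start M) w).

Definition regular (L : wset) : Prop :=
  exists M : dfa, forall w, L w <-> dfa_accept M w.

(* T_bin-free: no prefix-order embedding of {0,1}^* into T *)
Definition Tbin_free (T : wset) : Prop :=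
  ~ exists f : word -> word,
      injective f /\ (forall u, T (f u)) /\
      (forall u v, preceq u v <-> preceq (f u) (f v)).

Definition wfinite (S : wset) : Prop := exists s : seq word, forall x, S x -> x \in s.

Definition inf_branch (T B : wset) : Prop :=
  (forall x, B x -> T x) /\
  (forall u v, B (u ++ v) -> B u) /\
  (forall u v, B u -> B v -> preceq u v || preceq v u) /\
  ~ wfinite B.

Definition deriv (T : wset) : wset := fun u =>
  T u /\ exists B1 B2, inf_branch T B1 /\ inf_branch T B2 /\
          ~ (forall x, B1 x <-> B2 x) /\ B1 u /\ B2 u.

Definition iter_deriv (n : nat) (T : wset) : wset := iter n deriv T.

Definition is_CB (T : wset) (n : nat) : Prop :=
  wfinite (iter_deriv n T) /\ forall m, m < n -> ~ wfinite (iter_deriv m T).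

Definition restr (T : wset) (u : word) : wset := fun v => T (u ++ v).

Definition antichain (A : wset) : Prop :=
  forall u v, A u -> A v -> u <> v -> ~~ preceq u v.

From mathcomp Require Import all_boot.
From Stdlib Require Import Classical ClassicalEpsilon.

(* Let n = CB_*(T).  If n = 0 then T itself is finite and bounds every
   anti-chain.  If n = m + 1, put D = d^(m)(T), so that d(D) is finite and
   hence all its words are shorter than some L.  For u in an anti-chain with
   CB_*(T|u) = n, the set d^(m)(T|u) is infinite; it embeds into D|u, so by
   Koenig's lemma some infinite branch B_u of D passes through u.  Pick on B_u
   the word p(u) of length L.  If p(u) = p(v) for u <> v, then p(u) lies on
   the two branches B_u and B_v, which differ since u and v are incomparable;
   so p(u) belongs to d(D) although its length is L -- impossible.  Hence
   u |-> p(u) is injective into the words of length L, and C = 2^L (more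
   precisely, the number of words shorter than L + 1) works. *)

Lemma prefix_comparable {x y w : word} :
  prefix x w -> prefix y w -> prefix x y || prefix y x.
Proof.
move=> /prefixP[a ->] /prefixP[b].
elim: x y a => [|c x IH] [|d y] a //= E.
by case: E => -> /IH; rewrite eqxx.
Qed.

Lemma prefix_cat2 (u x y : word) : prefix (u ++ x) (u ++ y) = prefix x y.
Proof. by rewrite prefix_catr // eqxx. Qed.

Lemma cat_cancel (u x y : word) : u ++ x = u ++ y -> x = y.
Proof. by move=> /(congr1 (drop (size u))); rewrite !drop_size_cat. Qed.

Definition words_below (n : nat) : seq word :=
  flatten [seq codom (@tval k bool) | k <- iota 0 n].

Lemma words_belowP (n : nat) (w : word) : size w < n -> w \in words_below n.
Proof.
move=> lt_wn; apply/flatten_mapP; exists (size w); first by rewrite mem_iota.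
by rewrite -[w]in_tupleE codom_f.
Qed.

Lemma wfiniteP (S : wset) : wfinite S <-> exists L, forall x, S x -> size x < L.
Proof.
split=> [[l Sl]|[L SL]]; last by exists (words_below L) => x /SL/words_belowP.
exists (\max_(x <- l) size x).+1 => x /Sl x_l.
by rewrite ltnS (leq_bigmax_seq (F := size) x x_l).
Qed.

Lemma inf_branch_word_of_size {T B : wset} (L : nat) :
  inf_branch T B -> exists x, B x /\ size x = L.
Proof.
move=> [_ [B_closed [_ B_inf]]].
have [x [Bx le_Lx]] : exists x, B x /\ L <= size x.
  apply: NNPP => no_long; apply: B_inf; apply/wfiniteP; exists L => x Bx.
  by rewrite ltnNge; apply/negP => le_Lx; apply: no_long; exists x.
exists (take L x); split; last exact: size_takel.
by apply: (B_closed _ (drop L x)); rewrite cat_take_drop.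
Qed.

Lemma inf_branch_mono (S S' B : wset) :
  (forall x, S x -> S' x) -> inf_branch S B -> inf_branch S' B.
Proof. by move=> sub_SS' [B_S B_rest]; split=> // x /B_S /sub_SS'. Qed.

Lemma deriv_mono (S S' : wset) :
  (forall x, S x -> S' x) -> forall x, deriv S x -> deriv S' x.
Proof.
move=> sub_SS' x [Sx [B1 [B2 [B1_br [B2_br B12]]]]]; split; first exact: sub_SS'.
exists B1, B2; split; first exact: inf_branch_mono B1_br.
by split; first exact: inf_branch_mono B2_br.
Qed.

(* The derivative of any set of words is a tree: branches are prefix-closed. *)
Lemma deriv_tree (S : wset) : is_tree (deriv S).
Proof.
move=> u v [_ [B1 [B2 [B1_br [B2_br [B12 [B1uv B2uv]]]]]]].
have B1u := B1_br.2.1 _ _ B1uv; have B2u := B2_br.2.1 _ _ B2uv.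
by split; [exact: B1_br.1 | exists B1, B2].
Qed.

Lemma iter_deriv_tree (m : nat) (T : wset) : is_tree T -> is_tree (iter_deriv m T).
Proof. by case: m => [|m] //= _; apply: deriv_tree. Qed.

Definition lift_branch (u : word) (B : wset) : wset :=
  fun x => prefix x u \/ exists y, B y /\ x = u ++ y.

Lemma lift_branch_cat (u x : word) (B : wset) :
  B [::] -> lift_branch u B (u ++ x) -> B x.
Proof.
move=> B0 [|[y [By /cat_cancel ->]]] //.
by rewrite -{2}(cats0 u) prefix_cat2 prefixs0 => /eqP ->.
Qed.

Lemma lift_inf_branch (S : wset) (u v : word) (B : wset) :
  is_tree S -> inf_branch (restr S u) B -> B v -> inf_branch S (lift_branch u B).
Proof.
move=> S_tree [B_S [B_closed [B_lin B_inf]]] Bv.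
have Su : S u by apply: (S_tree u v); apply: B_S.
split; [|split; [|split]].
- move=> x [/prefixP [z E]|[y [By ->]]]; last exact: B_S.
  by apply: (S_tree x z); rewrite -E.
- move=> x y [x_u|[z [Bz E]]]; first by left; apply: catl_prefix x_u.
  have x_uz : prefix x (u ++ z) by rewrite -E prefix_prefix.
  case/orP: (prefix_comparable x_uz (prefix_prefix u z)) => [x_u|/prefixP [w Ex]].
    by left.
  right; exists w; split=> //; apply: (B_closed w y).
  suff -> : w ++ y = z by [].
  by apply: (@cat_cancel u); rewrite catA -Ex E.
- move=> x y [x_u|[z1 [B1 ->]]] [y_u|[z2 [B2 ->]]]; rewrite /preceq.
  + exact: prefix_comparable x_u y_u.
  + by rewrite (prefix_catl _ x_u).
  + by rewrite (prefix_catl _ y_u) orbT.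
  + by rewrite !prefix_cat2; apply: B_lin.
- move=> [l Bl]; apply: B_inf; exists (map (drop (size u)) l) => y By.
  apply/mapP; exists (u ++ y); last by rewrite drop_size_cat.
  by apply: Bl; right; exists y.
Qed.

Lemma deriv_restr (S : wset) (u v : word) :
  is_tree S -> deriv (restr S u) v -> deriv S (u ++ v).
Proof.
move=> S_tree [Sv [B1 [B2 [B1_br [B2_br [B12 [B1v B2v]]]]]]]; split=> //.
exists (lift_branch u B1), (lift_branch u B2).
have B10 : B1 [::] by apply: (B1_br.2.1 [::] v).
have B20 : B2 [::] by apply: (B2_br.2.1 [::] v).
split; first exact: lift_inf_branch B1_br B1v.
split; first exact: lift_inf_branch B2_br B2v.
split; last by split; right; exists v.
move=> eq_lift; apply: B12 => x.
by split=> Bx; apply: lift_branch_cat => //; apply/eq_lift; right; exists x.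
Qed.

Lemma iter_deriv_restr (m : nat) (T : wset) (u x : word) : is_tree T ->
  iter_deriv m (restr T u) x -> iter_deriv m T (u ++ x).
Proof.
move=> T_tree; elim: m x => [|m IH] x // dx.
apply: (deriv_restr _ _ _ (iter_deriv_tree m T T_tree)).
exact: (deriv_mono _ _ IH _ dx).
Qed.

Lemma restr_iter_deriv_infinite {m : nat} {T : wset} {u : word} : is_tree T ->
  ~ wfinite (iter_deriv m (restr T u)) -> ~ wfinite (restr (iter_deriv m T) u).
Proof.
move=> T_tree dTu_inf [l dT_l]; apply: dTu_inf; exists l => x dx.
exact/dT_l/iter_deriv_restr.
Qed.

Section Koenig.

Variable D : wset.
Hypothesis D_tree : is_tree D.

Definition infinite_above (w : word) : Prop := ~ wfinite (restr D w).

Lemma infinite_above_D (w : word) : infinite_above w -> D w.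
Proof.
move=> w_inf; apply: NNPP => Dw; apply: w_inf; exists [::] => v Dwv.
by case: Dw; apply: (D_tree w v).
Qed.

(* Finitely many extensions through each of the two children would leave
   finitely many extensions of [w]. *)
Lemma infinite_above_step (w : word) :
  infinite_above w -> exists b, infinite_above (rcons w b).
Proof.
move=> w_inf; apply: NNPP => no_child; apply: w_inf.
have child_fin b : wfinite (restr D (rcons w b)).
  by apply: NNPP => b_inf; apply: no_child; exists b.
have [[l0 l0P] [l1 l1P]] := (child_fin false, child_fin true).
exists ([::] :: map (cons false) l0 ++ map (cons true) l1) => -[|[] x] Dwx.
- exact: mem_head.
- by rewrite inE mem_cat map_f ?orbT //; apply: l1P; rewrite /restr cat_rcons.
- by rewrite inE mem_cat map_f //; apply: l0P; rewrite /restr cat_rcons.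
Qed.

Definition next_word (w : word) : word :=
  rcons w (epsilon (inhabits false) (fun b => infinite_above (rcons w b))).

Definition koenig_chain (u : word) (k : nat) : word := iter k next_word u.

Lemma koenig_chain_infinite (u : word) (k : nat) :
  infinite_above u -> infinite_above (koenig_chain u k).
Proof.
move=> u_inf; elim: k => //= k IH.
exact: epsilon_spec (infinite_above_step _ IH).
Qed.

Lemma size_koenig_chain (u : word) (k : nat) : size (koenig_chain u k) = size u + k.
Proof. by elim: k => [|k IH]; rewrite ?addn0 //= size_rcons IH addnS. Qed.

Lemma koenig_chain_prefix (u : word) (i j : nat) :
  i <= j -> prefix (koenig_chain u i) (koenig_chain u j).
Proof.
move=> /subnK <-; elim: (j - i) => [|d IH]; first exact: prefix_refl.
by rewrite addSn; apply: (prefix_trans IH); apply: prefix_rcons.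
Qed.

Definition koenig_branch (u : word) : wset :=
  fun x => exists k, prefix x (koenig_chain u k).

Lemma koenig (u : word) :
  infinite_above u -> inf_branch D (koenig_branch u) /\ koenig_branch u u.
Proof.
move=> u_inf; split; last by exists 0; apply: prefix_refl.
split; [|split; [|split]].
- move=> x [k /prefixP [z E]]; apply: (D_tree x z); rewrite -E.
  exact/infinite_above_D/koenig_chain_infinite.
- by move=> x y [k xy_k]; exists k; apply: catl_prefix xy_k.
- move=> x y [i x_i] [j y_j]; apply: (@prefix_comparable _ _ (koenig_chain u (i + j))).
    by apply: (prefix_trans x_i); apply: koenig_chain_prefix; apply: leq_addr.
  by apply: (prefix_trans y_j); apply: koenig_chain_prefix; apply: leq_addl.
- move=> /wfiniteP [L bounded].
  have := bounded (koenig_chain u L) (ex_intro _ L (prefix_refl _)).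
  by rewrite size_koenig_chain ltnNge leq_addl.
Qed.

End Koenig.

Definition incomparable_seq (s : seq word) : Prop :=
  forall u v, u \in s -> v \in s -> u <> v -> ~~ preceq u v.

(* Each such u is sent to the word of length L
   on a branch through u; two distinct u, v with the same image would make
   that word a branching point of D. *)
Lemma branching_antichain_bound (D : wset) (L : nat) (s : seq word) :
  (forall x, deriv D x -> size x < L) -> uniq s -> incomparable_seq s ->
  (forall u, u \in s -> exists B, inf_branch D B /\ B u) ->
  size s <= size (words_below L.+1).
Proof.
move=> short_deriv s_uniq s_inc s_branch.
pose on_branch u w := size w = L /\ exists B, inf_branch D B /\ B u /\ B w.
pose p u := epsilon (inhabits [::]) (on_branch u).
have pP u : u \in s -> on_branch u (p u).
  move=> /s_branch [B [B_br Bu]]; apply: epsilon_spec.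
  have [w [Bw size_w]] := inf_branch_word_of_size L B_br.
  by exists w; split=> //; exists B.
rewrite -(size_map p); apply: uniq_leq_size.
- rewrite map_inj_in_uniq // => u v u_s v_s eq_p; apply: NNPP => neq_uv.
  have [size_pu [Bu [Bu_br [Buu Bu_pu]]]] := pP u u_s.
  have [_ [Bv [Bv_br [Bvv Bv_pv]]]] := pP v v_s.
  suff /short_deriv : deriv D (p u) by rewrite size_pu ltnn.
  split; first exact: Bu_br.1.
  exists Bu, Bv; do 2 split=> //; split; last by split; last rewrite eq_p.
  move=> same_branch; have := Bv_br.2.2.1 u v ((same_branch u).1 Buu) Bvv.
  have := s_inc u v u_s v_s neq_uv.
  by have := s_inc v u v_s u_s (fun e => neq_uv (esym e)) => /negbTE -> /negbTE ->.
- by move=> _ /mapP [u u_s ->]; apply: words_belowP; rewrite (pP u u_s).1.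
Qed.

Lemma rank_antichain_bound {T : wset} {m : nat} :
  is_tree T -> wfinite (iter_deriv m.+1 T) ->
  exists C, forall s : seq word, uniq s -> incomparable_seq s ->
    (forall u, u \in s -> ~ wfinite (iter_deriv m (restr T u))) -> size s <= C.
Proof.
move=> T_tree /wfiniteP [L short_deriv].
exists (size (words_below L.+1)) => s s_uniq s_inc s_inf.
apply: (@branching_antichain_bound (iter_deriv m T)) => // u /s_inf Tu_inf.
have [B_br Bu] := koenig _ (iter_deriv_tree m T T_tree)
  u (restr_iter_deriv_infinite T_tree Tu_inf).
by exists (koenig_branch (iter_deriv m T) u).
Qed.

Lemma is_CB_unique {S : wset} {n n' : nat} : is_CB S n -> is_CB S n' -> n = n'.
Proof.
move=> [S_n n_least] [S_n' n'_least].
by case: (ltngtP n n') => // lt_nn'; [case: (n'_least _ lt_nn') | case: (n_least _ lt_nn')].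
Qed.

(* Only the existence of CB_*(T) is used; for the trees of the statement it
   is guaranteed by regularity and T_bin-freeness, and without it no u
   satisfies the hypothesis on the anti-chain. *)
Theorem lemma5p6 (T : wset) (hT : is_tree T) (hreg : regular T)
    (hfree : Tbin_free T) :
  exists C : nat, forall A : wset,
    antichain A -> (forall u, A u -> T u) ->
    forall s : seq word, uniq s ->
      (forall u, u \in s ->
         A u /\ exists n, is_CB T n /\ is_CB (restr T u) n) ->
      size s <= C.
Proof.
have [[n T_n]|no_rank] := classic (exists n, is_CB T n); last first.
  exists 0 => A _ _ [|u s] // _ s_A; case: no_rank.
  by have [_ [n [T_n _]]] := s_A u (mem_head _ _); exists n.
case: n T_n => [|m] T_n.
-
  have [[l T_l] _] := T_n; exists (size l) => A _ A_T s s_uniq s_A.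
  by apply: uniq_leq_size => // u /s_A [/A_T/T_l].
- have [C C_bound] := rank_antichain_bound hT T_n.1.
  exists C => A A_anti _ s s_uniq s_A; apply: C_bound => // [u v u_s v_s|u u_s].
    by have [[Au _] [Av _]] := (s_A u u_s, s_A v v_s); apply: A_anti.
  have [_ [n [T_n' Tu_n]]] := s_A u u_s.
  rewrite (is_CB_unique T_n' T_n) in Tu_n.
  exact: Tu_n.2 m (ltnSn m).
Qed.
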